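(* Let $r\geq 2$ and let $G$ be an $r$-uniform hypergraph with vertex set $\{1,\ldots,n\}$ and $m$ edges. If $\mathbf{x}\in\Delta^{n-1}$ is an eigenvector to $\mu(G)$, then \[ \mu(G)\leq m\,\sigma(\mathbf{x})^r. \]
   Context: $\Delta^{n-1}=\{\mathbf{x}\in\mathbb{R}^n: x_i\geq0 \text{ for all } i,\ \sum_i x_i=1\}$. For $G$ with edge set $E$, define \[ P_G(\mathbf{x})=\sum_{\{i_1,\ldots,i_r\}\in E}x_{i_1}\cdots x_{i_r} \qquad\text{and}\qquad \mu(G)=\max_{\mathbf{x}\in\Delta^{n-1}}P_G(\mathbf{x}). \] A vector $\mathbf{x}\in\Delta^{n-1}$ with $P_G(\mathbf{x})=\mu(G)$ is called an eigenvector to $\mu(G)$. $\sigma(\mathbf{x})=x_1^{x_1}\cdots x_n^{x_n}$, with the convention $0^0=1$. *)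

From HB Require Import structures.
From mathcomp Require Import all_boot all_order all_algebra.
From mathcomp Require Import all_classical all_reals all_analysis.
Set Implicit Arguments. Unset Strict Implicit. Unset Printing Implicit Defensive.
Import Order.TTheory GRing.Theory Num.Theory.
Local Open Scope ring_scope.
Local Open Scope classical_set_scope.

(* Vertex set {1..n} is modelled by 'I_n; a hypergraph is its edge set
   E : {set {set 'I_n}}; it is r-uniform when every edge has exactly r vertices. *)
Definition uniform (n r : nat) (E : {set {set 'I_n}}) : Prop :=
  forall e, e \in E -> #|e| = r.

Definition simplex (R : realType) (n : nat) (x : 'I_n -> R) : Prop :=
  (forall i, 0 <= x i) /\ \sum_(i < n) x i = 1.

Definition lagr (R : realType) (n : nat) (E : {set {set 'I_n}}) (x : 'I_n -> R) : R :=
  \sum_(e in E) \prod_(i in e) x i.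

(* mu(G) = max over the simplex of P_G (taken as the supremum, attained by compactness) *)
Definition mu (R : realType) (n : nat) (E : {set {set 'I_n}}) : R :=
  sup [set lagr E x | x in [set x | simplex x]].

(* sigma(x) = prod x_i^{x_i}, with 0^0 = 1 (powR 0 0 = 1) *)
Definition sigma (R : realType) (n : nat) (x : 'I_n -> R) : R :=
  \prod_(i < n) powR (x i) (x i).

From mathcomp Require Import all_boot all_order all_algebra.
From mathcomp Require Import all_classical all_reals all_analysis.
From mathcomp Require Import ring lra.
Import Order.TTheory GRing.Theory Num.Theory.
Local Open Scope ring_scope.

(* Write w_e = prod_(k in e) x_k, so that mu = sum_e w_e.  At a maximiser x,
   moving mass between two vertices cannot increase P_G, so the partial
   derivative D_i = dP_G/dx_i is maximal, hence constant, on the support of x;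
   Euler's identity sum_i x_i D_i = r mu makes this constant r mu, i.e.
   sum_(e containing i) w_e = r mu x_i for every i.  Expanding
   ln w_e = sum_(i in e) ln x_i then gives sum_e w_e ln w_e = r mu ln sigma(x),
   while the log-sum inequality bounds the left-hand side below by
   mu ln (mu / m). *)

Lemma prod_setD1 {R : comPzSemiRingType} {I : finType} {A : {set I}} {F : I -> R} {i} :
  i \in A -> \prod_(k in A) F k = F i * \prod_(k in A :\ i) F k.
Proof. exact: big_setD1. Qed.

Section LnSums.
Context {R : realType}.

Lemma ln_prod (I : Type) (s : seq I) (P : pred I) (F : I -> R) :
  (forall i, P i -> 0 < F i) ->
  ln (\prod_(i <- s | P i) F i) = \sum_(i <- s | P i) ln (F i).
Proof.
move=> F_gt0.
suff [] : 0 < \prod_(i <- s | P i) F i /\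
          ln (\prod_(i <- s | P i) F i) = \sum_(i <- s | P i) ln (F i) by [].
apply: (big_ind2 (fun a b => 0 < a /\ ln a = b)) => [|a b c d [a_gt0 <-] [c_gt0 <-]|i Pi].
- by rewrite ln1 ltr01.
- by split; [exact: mulr_gt0 | rewrite lnM].
- by split; [exact: F_gt0 |].
Qed.

Lemma mul_ln_prod (I : finType) (A : {pred I}) (F : I -> R) :
  (forall i, 0 <= F i) ->
  (\prod_(i in A) F i) * ln (\prod_(i in A) F i)
  = \sum_(i in A) (\prod_(j in A) F j) * ln (F i).
Proof.
move=> F_ge0; set p := \prod_(j in A) F j.
have [p0|p_neq0] := eqVneq p 0.
  by rewrite p0 mul0r big1 // => i _; rewrite mul0r.
rewrite -mulr_sumr ln_prod // => i Ai.
rewrite lt_def F_ge0 andbT; apply: contra_neq p_neq0 => Fi0.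
by rewrite /p (bigD1 i Ai) /= Fi0 mul0r.
Qed.

Lemma powR_self_gt0 (a : R) : 0 < a `^ a.
Proof. by rewrite /powR; case: eqVneq => _; [exact: ltr01 | exact: expR_gt0]. Qed.

(* The left-hand side is the tangent line of a |-> a ln a at c. *)
Lemma mulr_ln_ge (a c : R) : 0 <= a -> 0 < c -> a * ln c + a - c <= a * ln a.
Proof.
rewrite le_eqVlt => /predU1P[<- c_gt0|a_gt0 c_gt0]; first by lra.
have : ln (c / a) <= c / a - 1.
  have := @le_ln1Dx R (c / a - 1); rewrite [1 + _]addrC subrK; apply.
  by rewrite ltrBrDl subrr divr_gt0.
rewrite ln_div ?posrE // -(ler_pM2l a_gt0) mulrBr mulrBr mulr1 mulrCA divff ?gt_eqF //.
by lra.
Qed.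

Lemma card_gt0_sumr (I : finType) (A : {pred I}) (w : I -> R) :
  0 < \sum_(i in A) w i -> (0 < #|A|)%N.
Proof.
apply: contraTT; rewrite -leqNgt leqn0 => /eqP/card0_eq A0.
by rewrite big_pred0 ?ltxx // => i; exact: A0.
Qed.

Lemma log_sum_ge (I : finType) (A : {pred I}) (w : I -> R) :
  (forall i, 0 <= w i) -> 0 < \sum_(i in A) w i ->
  (\sum_(i in A) w i) * ln ((\sum_(i in A) w i) / #|A|%:R)
  <= \sum_(i in A) w i * ln (w i).
Proof.
move=> w_ge0; set W := \sum_(i in A) w i => W_gt0.
have card_gt0 : 0 < #|A|%:R :> R by rewrite ltr0n; exact: card_gt0_sumr W_gt0.
set c := W / #|A|%:R.
have c_gt0 : 0 < c by exact: divr_gt0.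
suff -> : W * ln c = \sum_(i in A) (w i * ln c + w i - c).
  by apply: ler_sum => i _; exact: mulr_ln_ge.
rewrite !big_split /= sumrN sumr_const -mulr_suml -/W -mulr_natr /c divfK ?gt_eqF //.
by rewrite addrK.
Qed.

End LnSums.

Section Lagrangian.
Context {R : realType} {n : nat} (E : {set {set 'I_n}}).
Implicit Types (x y : 'I_n -> R) (i j k : 'I_n) (e S : {set 'I_n}).

Definition lagr_partial x i : R :=
  \sum_(e in E | i \in e) \prod_(k in e :\ i) x k.

Definition lagr_mixed x i j : R :=
  \sum_(e in E | (i \in e) && (j \in e)) \prod_(k in e :\ i :\ j) x k.

Definition transfer x i j (t : R) k : R :=
  x k - (if k == i then t else 0) + (if k == j then t else 0).

Lemma simplex_ge0_le1 y k : simplex y -> 0 <= y k <= 1.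
Proof.
case=> y_ge0 y_sum; rewrite y_ge0 -y_sum (bigD1 k) //= lerDl.
by apply: sumr_ge0 => l _.
Qed.

Lemma lagr_le_mu y : simplex y -> lagr E y <= mu R E.
Proof.
move=> y_simplex; apply: ub_le_sup; last by exists y.
exists #|E|%:R => _ [z z_simplex <-].
rewrite /lagr -sumr_const; apply: ler_sum => e _.
by apply: prodr_ile1 => k _; exact: simplex_ge0_le1.
Qed.

Lemma exchange_incident (F : {set 'I_n} -> 'I_n -> R) :
  \sum_i \sum_(e in E | i \in e) F e i = \sum_(e in E) \sum_(i in e) F e i.
Proof. by rewrite [RHS](exchange_big_dep predT). Qed.

Lemma lagr_mixed_ge0 x i j : (forall k, 0 <= x k) -> 0 <= lagr_mixed x i j.
Proof. by move=> x_ge0; apply: sumr_ge0 => e _; apply: prodr_ge0. Qed.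

Section Transfer.
Variables (x : 'I_n -> R) (i j : 'I_n) (t : R).
Hypothesis neq_ij : i != j.

Lemma transfer_src : transfer x i j t i = x i - t.
Proof. by rewrite /transfer eqxx (negbTE neq_ij) addr0. Qed.

Lemma transfer_dst : transfer x i j t j = x j + t.
Proof. by rewrite /transfer eqxx eq_sym (negbTE neq_ij) subr0. Qed.

Lemma prod_transfer_out S : i \notin S -> j \notin S ->
  \prod_(k in S) transfer x i j t k = \prod_(k in S) x k.
Proof.
move=> iNS jNS; apply: eq_bigr => k kS.
have [/negbTE ki /negbTE kj] : k != i /\ k != j.
  by split; apply: contraTneq kS => ->.
by rewrite /transfer ki kj subr0 addr0.
Qed.

Lemma prod_transfer e :
  \prod_(k in e) transfer x i j t k = \prod_(k in e) x k
   + t * ((if j \in e then \prod_(k in e :\ j) x k else 0)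
          - (if i \in e then \prod_(k in e :\ i) x k else 0))
   - t ^+ 2 * (if (i \in e) && (j \in e) then \prod_(k in e :\ i :\ j) x k else 0).
Proof.
case ie: (i \in e); case je: (j \in e) => /=.
- have je' : j \in e :\ i by rewrite !inE eq_sym neq_ij.
  rewrite !(prod_setD1 ie) !(prod_setD1 je') transfer_src transfer_dst.
  rewrite prod_transfer_out ?setD11 ?inE ?eqxx ?andbF //.
  rewrite (prod_setD1 (_ : i \in e :\ j)) ?inE ?neq_ij //.
  by rewrite [e :\ j :\ i]finset.setDDl finset.setUC -finset.setDDl; ring.
- rewrite !(prod_setD1 ie) transfer_src prod_transfer_out ?setD11 //.
    by ring.
  by rewrite inE je andbF.
- rewrite !(prod_setD1 je) transfer_dst prod_transfer_out ?setD11 //.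
    by ring.
  by rewrite inE ie andbF.
- by rewrite prod_transfer_out ?ie ?je //; ring.
Qed.

Lemma lagr_transfer :
  lagr E (transfer x i j t)
  = lagr E x + t * (lagr_partial x j - lagr_partial x i) - t ^+ 2 * lagr_mixed x i j.
Proof.
rewrite /lagr /lagr_partial /lagr_mixed !big_mkcondr /=.
rewrite (eq_bigr _ (fun e _ => prod_transfer e)).
by rewrite sumrB big_split /= -!mulr_sumr sumrB.
Qed.

Lemma simplex_transfer : simplex x -> 0 <= t <= x i -> simplex (transfer x i j t).
Proof.
move=> [x_ge0 x_sum] /andP[t_ge0 t_le]; split=> [k|].
  have := x_ge0 k; rewrite /transfer.
  by case: (eqVneq k i) => [->|_]; [rewrite (negbTE neq_ij) | case: ifP]; lra.
rewrite /transfer big_split /= sumrB x_sum -!big_mkcond /= !big_pred1_eq.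
by rewrite subrK.
Qed.

End Transfer.

Section Maximiser.
Context {x : 'I_n -> R} {r : nat}.
Hypotheses (x_simplex : simplex x) (x_max : lagr E x = mu R E) (E_unif : uniform r E).

(* First-order optimality: moving a small mass t from i to j changes P_G by
   t (D_j - D_i) - t^2 C, which would be positive if D_j > D_i. *)
Lemma lagr_partial_le_support i j : 0 < x i -> lagr_partial x j <= lagr_partial x i.
Proof.
move=> xi_gt0; have [<-//|neq_ij] := eqVneq i j.
rewrite leNgt; apply/negP; rewrite -subr_gt0; set d := _ - _ => d_gt0.
have C_ge0 := lagr_mixed_ge0 _ i j x_simplex.1.
set C := lagr_mixed x i j in C_ge0.
set t := Num.min (x i) (d / (2 * (C + 1))).
have t_gt0 : 0 < t by rewrite lt_min xi_gt0 divr_gt0 //; lra.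
have t_le_xi : t <= x i by rewrite ge_min lexx.
have tC_le : t * (2 * (C + 1)) <= d.
  by rewrite -ler_pdivlMr ?ge_min ?lexx ?orbT //; lra.
have y_simplex : simplex (transfer x i j t).
  by apply: simplex_transfer; rewrite ?t_le_xi ?ltW.
have := lagr_le_mu _ y_simplex; rewrite lagr_transfer // x_max -/d -/C.
by nra.
Qed.

Lemma mul_lagr_partial i :
  x i * lagr_partial x i = \sum_(e in E | i \in e) \prod_(k in e) x k.
Proof. by rewrite mulr_sumr; apply: eq_bigr => e /andP[_ ie]; rewrite (prod_setD1 ie). Qed.

Lemma sum_mul_lagr_partial : \sum_i x i * lagr_partial x i = r%:R * lagr E x.
Proof.
rewrite (eq_bigr _ (fun i _ => mul_lagr_partial i)).
rewrite (exchange_incident (fun e _ => \prod_(k in e) x k)) /lagr mulr_sumr.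
by apply: eq_bigr => e eE; rewrite sumr_const E_unif // mulr_natl.
Qed.

Lemma lagr_partial_support i : 0 < x i -> lagr_partial x i = r%:R * lagr E x.
Proof.
move=> xi_gt0; rewrite -sum_mul_lagr_partial.
have const k : x k * lagr_partial x k = x k * lagr_partial x i.
  have [->|xk_neq0] := eqVneq (x k) 0; first by rewrite !mul0r.
  have xk_gt0 : 0 < x k by rewrite lt_def xk_neq0 x_simplex.1.
  by congr (_ * _); apply/eqP; rewrite eq_le !lagr_partial_le_support.
by rewrite (eq_bigr _ (fun k _ => const k)) -mulr_suml x_simplex.2 mul1r.
Qed.

Lemma incident_weight i :
  \sum_(e in E | i \in e) \prod_(k in e) x k = r%:R * lagr E x * x i.
Proof.
rewrite -mul_lagr_partial mulrC.
have [->|xi_neq0] := eqVneq (x i) 0; first by rewrite !mulr0.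
by rewrite lagr_partial_support // lt_def xi_neq0 x_simplex.1.
Qed.

Lemma sum_edge_entropy :
  \sum_(e in E) (\prod_(k in e) x k) * ln (\prod_(k in e) x k)
  = r%:R * lagr E x * ln (sigma x).
Proof.
rewrite (eq_bigr _ (fun e _ => mul_ln_prod _ e _ x_simplex.1)) -exchange_incident.
rewrite /sigma ln_prod => [|i _]; last exact: powR_self_gt0.
rewrite mulr_sumr; apply: eq_bigr => i _.
by rewrite -mulr_suml incident_weight ln_powR mulrA.
Qed.

End Maximiser.

End Lagrangian.

(* The bound holds for every r. *)
Theorem lemma8 (R : realType) (n r : nat) (E : {set {set 'I_n}})
  (hr : (2 <= r)%N) (hE : uniform r E) (x : 'I_n -> R)
  (hx : simplex x) (heig : lagr E x = mu R E) :
  mu R E <= (#|E|%:R) * sigma x ^+ r.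
Proof.
have sigma_gt0 : 0 < sigma x by apply: prodr_gt0 => i _; exact: powR_self_gt0.
have weight_ge0 (e : {set 'I_n}) : 0 <= \prod_(k in e) x k.
  by apply: prodr_ge0 => k _; exact: hx.1.
rewrite -heig; set P := lagr E x.
have : 0 <= P by apply: sumr_ge0 => e _; exact: weight_ge0.
rewrite le_eqVlt => /predU1P[P0|P_gt0].
  by rewrite -P0 mulr_ge0 // exprn_ge0 // ltW.
have := log_sum_ge _ E (fun e => \prod_(k in e) x k) weight_ge0 P_gt0.
rewrite (sum_edge_entropy E hx heig hE) -/P.
have card_gt0 : 0 < #|E|%:R :> R by rewrite ltr0n; exact: card_gt0_sumr P_gt0.
rewrite -[\sum_(e in E) _]/P => entropy_le.
have : ln (P / #|E|%:R) <= ln (sigma x ^+ r).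
  by rewrite lnXn // -[_ *+ r]mulr_natl -(ler_pM2l P_gt0) mulrA [P * _%:R]mulrC.
by rewrite ler_ln ?posrE ?divr_gt0 ?exprn_gt0 // ler_pdivrMr // mulrC.
Qed.
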